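(* Let $0\le z<t\le n$ and consider any $((t,n;z))_q$ QSS scheme whose secret consists of $m$ qudits. Then for every authorized set $A\subseteq[n]$, the communication cost of secret recovery from $A$ satisfies $$\mathrm{CC}_n(A)\geq\frac{|A|\,m}{|A|-z}.$$
   Context: A QSS scheme on $n$ parties is an encoding of a quantum secret into $n$ shares, share $j$ given to party $j\in[n]$. A set $P\subseteq[n]$ is authorized if the secret can be recovered from the shares of the parties in $P$, and unauthorized if those shares contain no information about the secret. For $0\le z<t\le n$, a $((t,n;z))_q$ QSS scheme is one in which every set of at least $t$ parties is authorized, every set of at most $z$ parties is unauthorized, and the secret consists of $m$ qudits and the $j$-th share of $w_j$ qudits, all of dimension $q$. For an authorized set $A$, a fixed (a priori) portion of each share of a party in $A$ is sent to a combiner, which recovers the secret from these qudits; the communication cost is $\mathrm{CC}_n(A)=\sum_{j\in A}h_{j,A}$, where $h_{j,A}$ is the number of qudits sent by party $j$. *)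

From mathcomp Require Import all_boot all_order all_algebra all_field.
Set Implicit Arguments. Unset Strict Implicit. Unset Printing Implicit Defensive.
Import Order.TTheory GRing.Theory Num.Theory.
Local Open Scope ring_scope.

(* Operators on the Hilbert space C^T with computational basis T (a finType). *)
Definition op (T : finType) := T -> T -> algC.

Definition psd (T : finType) (r : op T) : Prop :=
  forall v : T -> algC, 0 <= \sum_(x : T) \sum_(y : T) (v x)^* * r x y * v y.

Definition density (T : finType) (r : op T) : Prop :=
  psd r /\ \sum_(x : T) r x x = 1.

(* A quantum channel given by Kraus operators K_l : C^T -> C^U, acting on
   operators supported on the basis states satisfying D (the input space is
   span{ |x> : D x }). *)
Definition apply_kraus (T U : finType) (k : nat) (K : 'I_k -> U -> T -> algC)
  (D : pred T) (r : op T) : op U :=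
  fun a b => \sum_(l < k) \sum_(x | D x) \sum_(y | D y) K l a x * r x y * (K l b y)^*.

Definition kraus_tp (T U : finType) (k : nat) (K : 'I_k -> U -> T -> algC)
  (D : pred T) : Prop :=
  forall x y, D x -> D y ->
    \sum_(l < k) \sum_(a : U) (K l a x)^* * K l a y = (x == y)%:R.

(* qudit positions of the shares: qudit i of party j, i < w j *)
Definition Qd (n : nat) (w : 'I_n -> nat) := {j : 'I_n & 'I_(w j)}.
(* computational basis of all shares: a value in [0,q) for each qudit *)
Definition conf (n q : nat) (w : 'I_n -> nat) := {ffun Qd w -> 'I_q}.
(* computational basis of the secret of m qudits *)
Definition sconf (m q : nat) := {ffun 'I_m -> 'I_q}.

Definition share_qudits (n : nat) (w : 'I_n -> nat) (P : {set 'I_n}) : {set Qd w} :=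
  [set i : Qd w | tag i \in P].

Definition glue (n q : nat) (w : 'I_n -> nat) (S : {set Qd w}) (x c : conf q w)
  : conf q w := [ffun i => if i \in S then x i else c i].

Definition zero_outside (n q : nat) (w : 'I_n -> nat) (S : {set Qd w})
  : pred (conf q w) := fun c => [forall i, (i \notin S) ==> (val (c i) == 0%N)].

(* Partial trace over the qudits outside S. The reduced operator is
   represented on full basis states; its value depends only on the
   coordinates in S. *)
Definition ptrace (n q : nat) (w : 'I_n -> nat) (S : {set Qd w}) (r : op (conf q w))
  : op (conf q w) :=
  fun x y => \sum_(c : conf q w | [forall i, (i \in S) ==> (val (c i) == 0%N)])
               r (glue S x c) (glue S y c).

Definition encode (n m q : nat) (w : 'I_n -> nat) (k : nat)
  (E : 'I_k -> conf q w -> sconf m q -> algC) (r : op (sconf m q)) : op (conf q w) :=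
  apply_kraus E predT r.

Definition recoverable_from (n m q : nat) (w : 'I_n -> nat) (k : nat)
  (E : 'I_k -> conf q w -> sconf m q -> algC) (S : {set Qd w}) : Prop :=
  exists (k' : nat) (Dec : 'I_k' -> sconf m q -> conf q w -> algC),
    kraus_tp Dec (zero_outside S) /\
    forall r : op (sconf m q), density r ->
      forall a b, apply_kraus Dec (zero_outside S) (ptrace S (encode E r)) a b = r a b.

Definition authorized (n m q : nat) (w : 'I_n -> nat) (k : nat)
  (E : 'I_k -> conf q w -> sconf m q -> algC) (P : {set 'I_n}) : Prop :=
  recoverable_from E (share_qudits w P).

Definition unauthorized (n m q : nat) (w : 'I_n -> nat) (k : nat)
  (E : 'I_k -> conf q w -> sconf m q -> algC) (P : {set 'I_n}) : Prop :=
  forall r1 r2 : op (sconf m q), density r1 -> density r2 ->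
    forall x y, ptrace (share_qudits w P) (encode E r1) x y
              = ptrace (share_qudits w P) (encode E r2) x y.

Definition is_QSS (n m q : nat) (w : 'I_n -> nat) (t z : nat) (k : nat)
  (E : 'I_k -> conf q w -> sconf m q -> algC) : Prop :=
  kraus_tp E predT /\
  (forall P : {set 'I_n}, (t <= #|P|)%N -> authorized E P) /\
  (forall P : {set 'I_n}, (#|P| <= z)%N -> unauthorized E P).

From mathcomp Require Import all_boot all_order all_algebra all_field.
From mathcomp Require Import ring.
Import Order.TTheory GRing.Theory Num.Theory.
Set Implicit Arguments. Unset Strict Implicit. Unset Printing Implicit Defensive.

(* Purify the encoding with a reference system R indexing the basis of the
   secret (dimension q^m) and an environment made of the qudits outside S and
   the Kraus index, and split S into T = S :&: Z and U = S :\: Z for a set Z of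
   at most z parties.  Recoverability from S forces the marginal of this pure
   state on R (x) environment to be (identity on R) (x) omega; since Z is
   unauthorized, the marginal on R (x) T is (identity on R) (x) sigma.  Marginals
   of a pure state on complementary systems have the same purity, and tracing
   out U lowers the purity by a factor at most dim U; applied in both directions
   this gives q^m <= dim U = q^#|U|, i.e. m <= #|S :\: Z|.  Averaging over the
   z-subsets Z of A, each qudit of S avoids Z with frequency (#|A| - z)/#|A|,
   whence #|S| (#|A| - z) >= #|A| m. *)


Section Averaging.
Variables (I X : finType) (f : X -> I) (S : {set X}) (A : {set I}).
Hypothesis fSA : {in S, forall x, f x \in A}.

Lemma sum_card_setD_preimset_draws z :
  \sum_(Z in [set Z : {set I} | Z \subset A & #|Z| == z]) #|S :\: f @^-1: Z|
  = #|S| * 'C(#|A|.-1, z).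
Proof.
have cardE Z : #|S :\: f @^-1: Z| = \sum_(x in S) (f x \notin Z).
  by rewrite -sum1_card big_mkcond [RHS]big_mkcond; apply: eq_bigr => x _;
     rewrite !inE; case: (x \in S); case: (f x \in Z).
under eq_bigr do rewrite cardE.
rewrite exchange_big /= -sum_nat_const; apply: eq_bigr => x xS.
rewrite (cardsD1 (f x) A) fSA // add1n -pred_Sn.
rewrite -cards_draws -[RHS]sum1_card.
rewrite [LHS]big_mkcond [RHS]big_mkcond; apply: eq_bigr => Z _.
by rewrite !inE subsetD1; case: (Z \subset A); case: (f x \in Z); case: (#|Z| == z).
Qed.

Lemma card_avoiding_draws_average m z : (z < #|A|)%N ->
  (forall Z : {set I}, Z \subset A -> #|Z| = z -> m <= #|S :\: f @^-1: Z|) ->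
  #|A| * m <= #|S| * (#|A| - z).
Proof.
move=> zA avoidZ.
set D := [set Z : {set I} | Z \subset A & #|Z| == z].
have le_sum : #|D| * m <= #|S| * 'C(#|A|.-1, z).
  rewrite -sum_card_setD_preimset_draws -sum_nat_const; apply: leq_sum => Z.
  by rewrite inE => /andP[ZA /eqP Zz]; apply: avoidZ.
have bin_pos : 0 < 'C(#|A|.-1, z) by rewrite bin_gt0 -ltnS (ltn_predK zA).
rewrite -(leq_pmul2r bin_pos) mulnAC mul_bin_down -cards_draws -/D.
by rewrite (mulnC #|S|) -!mulnA leq_mul2l le_sum orbT.
Qed.

End Averaging.

Local Open Scope ring_scope.

Lemma pair_bigE (R : nmodType) (I J : finType) (P : pred I) (Q : pred J)
    (F : I * J -> R) :
  \sum_(p | P p.1 && Q p.2) F p = \sum_(i | P i) \sum_(j | Q j) F (i, j).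
Proof.
rewrite (pair_big_dep P (fun _ => Q) (fun i j => F (i, j))).
by apply: eq_bigr => -[].
Qed.

Lemma pair_big_fst (R : nmodType) (I J : finType) (P : pred I) (F : I * J -> R) :
  \sum_(p | P p.1) F p = \sum_(i | P i) \sum_j F (i, j).
Proof. by rewrite -(pair_bigE P predT); apply: eq_bigl => p; rewrite andbT. Qed.

Lemma pair_big_snd (R : nmodType) (I J : finType) (Q : pred J) (F : I * J -> R) :
  \sum_(p | Q p.2) F p = \sum_i \sum_(j | Q j) F (i, j).
Proof. exact: (pair_bigE predT Q). Qed.

Lemma exchange_big2 (R : nmodType) (I J K L : finType) (P : pred I) (Q : pred J)
    (P' : pred K) (Q' : pred L) (F : I -> J -> K -> L -> R) :
  \sum_(i | P i) \sum_(j | Q j) \sum_(k | P' k) \sum_(l | Q' l) F i j k l =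
  \sum_(k | P' k) \sum_(l | Q' l) \sum_(i | P i) \sum_(j | Q j) F i j k l.
Proof.
under eq_bigr do rewrite exchange_big.
under eq_bigr do under eq_bigr do rewrite exchange_big.
by rewrite exchange_big; apply: eq_bigr => k _; rewrite exchange_big.
Qed.

Lemma sum_delta (R : pzSemiRingType) (I : finType) (P : pred I) (i : I) (F : I -> R) :
  P i -> \sum_(j | P j) (i == j)%:R * F j = F i.
Proof.
move=> Pi; rewrite (bigD1 i) //= eqxx mul1r big1 ?addr0 // => j /andP[_].
by rewrite eq_sym => /negbTE ->; rewrite mul0r.
Qed.

Section HilbertSchmidt.
Variable C : numClosedFieldType.

Lemma normCK_sum (I : finType) (P : pred I) (a : I -> C) :
  `|\sum_(i | P i) a i| ^+ 2 = \sum_(i | P i) \sum_(j | P j) a i * (a j)^*.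
Proof.
by rewrite normCK rmorph_sum mulr_suml; apply: eq_bigr => i _; rewrite mulr_sumr.
Qed.

Lemma sqr_normC_sum_le (I : finType) (P : pred I) (b : I -> C) :
  `|\sum_(i | P i) b i| ^+ 2 <= #|P|%:R * \sum_(i | P i) `|b i| ^+ 2.
Proof.
set N := #|P|%:R; set s := \sum_(i | P i) b i.
set Q := \sum_(i | P i) `|b i| ^+ 2.
have cross : \sum_(i | P i) \sum_(j | P j) b i * (b j)^* = `|s| ^+ 2.
  by rewrite normCK_sum.
have cross' : \sum_(i | P i) \sum_(j | P j) b j * (b i)^* = `|s| ^+ 2.
  by rewrite exchange_big.
have diag : \sum_(i | P i) \sum_(j | P j) `|b i| ^+ 2 = N * Q.
  by rewrite mulr_sumr; apply: eq_bigr => i _; rewrite sumr_const mulr_natl.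
have diag' : \sum_(i | P i) \sum_(j | P j) `|b j| ^+ 2 = N * Q.
  by rewrite exchange_big.
have lagrange : \sum_(i | P i) \sum_(j | P j) `|b i - b j| ^+ 2
                = 2%:R * (N * Q - `|s| ^+ 2).
  transitivity (\sum_(i | P i) \sum_(j | P j) (`|b i| ^+ 2 + `|b j| ^+ 2
                  - (b i * (b j)^* + b j * (b i)^*))).
    by apply: eq_bigr => i _; apply: eq_bigr => j _; rewrite !normCK rmorphB /=; ring.
  under eq_bigr do rewrite sumrB !big_split /=.
  by rewrite sumrB !big_split /= diag diag' cross cross'; ring.
have : 0 <= \sum_(i | P i) \sum_(j | P j) `|b i - b j| ^+ 2.
  by do 2!(apply: sumr_ge0 => ? _); rewrite exprn_ge0.
by rewrite lagrange pmulr_rge0 ?ltr0n // subr_ge0.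
Qed.

Definition hsnorm2 (X : finType) (PX : pred X) (rho : X -> X -> C) : C :=
  \sum_(x | PX x) \sum_(x' | PX x') `|rho x x'| ^+ 2.

Lemma hsnorm2_ge0 (X : finType) (PX : pred X) rho : 0 <= hsnorm2 PX rho.
Proof. by do 2!(apply: sumr_ge0 => ? _); rewrite exprn_ge0. Qed.

Lemma hsnorm2_scale (X : finType) (PX : pred X) (a : C) rho :
  hsnorm2 PX (fun x x' => a * rho x x') = `|a| ^+ 2 * hsnorm2 PX rho.
Proof.
rewrite /hsnorm2 mulr_sumr; apply: eq_bigr => x _; rewrite mulr_sumr.
by apply: eq_bigr => x' _; rewrite normrM exprMn.
Qed.

Lemma sqr_norm_natb (b : bool) (x : C) : `|b%:R * x| ^+ 2 = b%:R * `|x| ^+ 2.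
Proof. by case: b; rewrite ?mul1r ?mul0r ?normr0 ?expr0n. Qed.

Definition marginal (X Y : finType) (PY : pred Y) (F : X -> Y -> C) (x x' : X) : C :=
  \sum_(y | PY y) F x y * (F x' y)^*.

Lemma hsnorm2_marginalC (X Y : finType) (PX : pred X) (PY : pred Y) (F : X -> Y -> C) :
  hsnorm2 PX (marginal PY F) = hsnorm2 PY (marginal PX (fun y x => F x y)).
Proof.
rewrite /hsnorm2 /marginal.
transitivity (\sum_(x | PX x) \sum_(x' | PX x') \sum_(y | PY y) \sum_(y' | PY y')
                F x y * (F x' y)^* * ((F x y')^* * F x' y')).
  apply: eq_bigr => x _; apply: eq_bigr => x' _; rewrite normCK_sum.
  by apply: eq_bigr => y _; apply: eq_bigr => y' _; rewrite rmorphM /= conjCK.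
rewrite exchange_big2; apply: eq_bigr => y _; apply: eq_bigr => y' _.
rewrite normCK_sum; apply: eq_bigr => x _; apply: eq_bigr => x' _.
by rewrite rmorphM /= conjCK; ring.
Qed.

Lemma hsnorm2_partial_trace_le (T U : finType) (PT : pred T) (PU : pred U)
    (B : T * U -> T * U -> C) :
  hsnorm2 PT (fun t t' => \sum_(u | PU u) B (t, u) (t', u))
  <= #|PU|%:R * hsnorm2 (fun y => PT y.1 && PU y.2) B.
Proof.
rewrite /hsnorm2 pair_bigE.
under [X in _ <= _ * X]eq_bigr do under eq_bigr do rewrite pair_bigE.
apply: (@le_trans _ _ (#|PU|%:R * \sum_(t | PT t) \sum_(u | PU u) \sum_(t' | PT t')
                          `|B (t, u) (t', u)| ^+ 2)).
  rewrite mulr_sumr; apply: ler_sum => t _.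
  rewrite exchange_big mulr_sumr; apply: ler_sum => t' _.
  exact: sqr_normC_sum_le.
rewrite ler_wpM2l ?ler0n //; apply: ler_sum => t _; apply: ler_sum => u Pu.
apply: ler_sum => t' _; rewrite (bigD1 u) //= lerDl.
by apply: sumr_ge0 => *; rewrite exprn_ge0.
Qed.

(* [Psi s x y u] are the amplitudes of a pure state on R (x) X (x) Y (x) U. *)
Definition id_tensor_marginal (R X Y U : finType) (Psi : R -> X -> Y -> U -> C)
    (PX : pred X) (PY : pred Y) (PU : pred U) (rho : X -> X -> C) : Prop :=
  forall s s' x x', PX x -> PX x' ->
    \sum_(y | PY y) \sum_(u | PU u) Psi s x y u * (Psi s' x' y u)^*
    = (s == s')%:R * rho x x'.

End HilbertSchmidt.

Section Decoupling.
Variables (C : numClosedFieldType) (R X Y U : finType).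
Variables (PX : pred X) (PY : pred Y) (PU : pred U).
Variables (Psi : R -> X -> Y -> U -> C) (sigma : Y -> Y -> C) (omega : X -> X -> C).
Hypothesis sigmaP : id_tensor_marginal (fun s y x u => Psi s x y u) PY PX PU sigma.
Hypothesis omegaP : id_tensor_marginal Psi PX PY PU omega.

(* The marginals of Psi on R (x) X and on Y (x) U have the same purity, and
   tracing out U from the latter costs at most a factor #|PU|. *)
Lemma hsnorm2_id_tensor_le :
  #|R|%:R ^+ 2 * hsnorm2 PY sigma <= #|PU|%:R * (#|R|%:R * hsnorm2 PX omega).
Proof.
pose F (a : R * X) (b : Y * U) := Psi a.1 a.2 b.1 b.2.
pose PRX (a : R * X) := predT a.1 && PX a.2.
pose PYU (b : Y * U) := PY b.1 && PU b.2.
have hsRX : hsnorm2 PRX (marginal PYU F) = #|R|%:R * hsnorm2 PX omega.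
  transitivity (\sum_(s : R) \sum_(x | PX x) \sum_(s' : R) \sum_(x' | PX x')
                  (s == s')%:R * `|omega x x'| ^+ 2).
    rewrite /hsnorm2 pair_bigE; apply: eq_bigr => s _; apply: eq_bigr => x Px.
    rewrite pair_bigE; apply: eq_bigr => s' _; apply: eq_bigr => x' Px'.
    by rewrite /marginal pair_bigE omegaP // sqr_norm_natb.
  transitivity (\sum_(s : R) \sum_(s' : R) (s == s')%:R * hsnorm2 PX omega).
    apply: eq_bigr => s _; rewrite exchange_big; apply: eq_bigr => s' _.
    by rewrite mulr_sumr; apply: eq_bigr => x _; rewrite mulr_sumr.
  under eq_bigr do rewrite sum_delta //.
  by rewrite sumr_const mulr_natl.
have hsY : #|R|%:R ^+ 2 * hsnorm2 PY sigma =
    hsnorm2 PY (fun t t' => \sum_(u | PU u) marginal PRX (fun b a => F a b) (t, u) (t', u)).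
  rewrite -(normr_nat C #|R|) -hsnorm2_scale.
  apply: eq_bigr => t Pt; apply: eq_bigr => t' Pt'; congr (`|_| ^+ 2).
  rewrite /marginal exchange_big pair_bigE /=.
  under eq_bigr do rewrite sigmaP // eqxx mul1r.
  by rewrite sumr_const mulr_natl.
rewrite hsY -hsRX hsnorm2_marginalC.
exact: hsnorm2_partial_trace_le.
Qed.

End Decoupling.

Lemma hsnorm2_id_tensor_gt0 (C : numClosedFieldType) (R X Y U : finType)
    (PX : pred X) (PY : pred Y) (PU : pred U) (Psi : R -> X -> Y -> U -> C)
    (omega : X -> X -> C) (s0 : R) :
  id_tensor_marginal Psi PX PY PU omega ->
  \sum_(x | PX x) \sum_(y | PY y) \sum_(u | PU u) `|Psi s0 x y u| ^+ 2 != 0 ->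
  0 < hsnorm2 PX omega.
Proof.
move=> omegaP Psi_neq0; rewrite lt_def hsnorm2_ge0 andbT.
apply: contraNneq Psi_neq0 => hs0; rewrite big1 // => x Px.
have row_ge0 (x1 : X) (_ : PX x1) : 0 <= \sum_(x' | PX x') `|omega x1 x'| ^+ 2.
  by apply: sumr_ge0 => x' _; rewrite exprn_ge0.
have entry_ge0 (x' : X) (_ : PX x') : 0 <= `|omega x x'| ^+ 2 by rewrite exprn_ge0.
have omega_xx0 : omega x x = 0.
  apply/eqP; rewrite -normr_eq0 -sqrf_eq0; apply/eqP.
  exact: psumr_eq0P entry_ge0 (psumr_eq0P row_ge0 hs0 Px) x Px.
have := omegaP s0 s0 x x Px Px; rewrite eqxx mul1r omega_xx0 => sum0.
by rewrite -[RHS]sum0; apply: eq_bigr => y _; apply: eq_bigr => u _; rewrite normCK.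
Qed.

Lemma card_le_of_id_tensor_marginals (C : numClosedFieldType) (R X Y U : finType)
    (PX : pred X) (PY : pred Y) (PU : pred U) (Psi : R -> X -> Y -> U -> C)
    (sigma : Y -> Y -> C) (omega : X -> X -> C) (s0 : R) :
  id_tensor_marginal (fun s y x u => Psi s x y u) PY PX PU sigma ->
  id_tensor_marginal Psi PX PY PU omega ->
  \sum_(x | PX x) \sum_(y | PY y) \sum_(u | PU u) `|Psi s0 x y u| ^+ 2 != 0 ->
  (#|R| <= #|PU|)%N.
Proof.
move=> sigmaP omegaP Psi_neq0.
have le_sigma := hsnorm2_id_tensor_le sigmaP omegaP.
have le_omega := hsnorm2_id_tensor_le (Psi := fun s y x u => Psi s x y u) omegaP sigmaP.
have hs_omega_gt0 := hsnorm2_id_tensor_gt0 omegaP Psi_neq0.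
set a := hsnorm2 PY sigma in le_sigma le_omega.
set b := hsnorm2 PX omega in le_sigma le_omega hs_omega_gt0.
have R_gt0 : 0 < #|R|%:R :> C by rewrite ltr0n; apply/card_gt0P; exists s0.
have ab_gt0 : 0 < a + b by rewrite ltr_wpDl ?hsnorm2_ge0.
have : #|R|%:R * (#|R|%:R * (a + b)) <= #|PU|%:R * (#|R|%:R * (a + b)) :> C.
  have -> : #|R|%:R * (#|R|%:R * (a + b)) = #|R|%:R ^+ 2 * a + #|R|%:R ^+ 2 * b :> C.
    by ring.
  have -> : #|PU|%:R * (#|R|%:R * (a + b))
           = #|PU|%:R * (#|R|%:R * b) + #|PU|%:R * (#|R|%:R * a) :> C by ring.
  exact: lerD.
by rewrite ler_pM2r ?pmulr_rgt0 // ler_nat.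
Qed.

Section DensityTests.
Variable X : finType.

Definition rank1 (c : algC) (u : X -> algC) : op X := fun x y => c * u x * (u y)^*.

Definition superpos (s s' : X) (b : algC) (x : X) : algC :=
  (s == x)%:R + b * (s' == x)%:R.

Lemma sum_superpos s s' b (h : X -> algC) :
  \sum_x superpos s s' b x * h x = h s + b * h s'.
Proof.
rewrite /superpos; under eq_bigr do rewrite mulrDl -mulrA.
by rewrite big_split -mulr_sumr /= !sum_delta.
Qed.

Lemma conj_superpos s s' b x : (superpos s s' b x)^* = superpos s s' b^* x.
Proof. by rewrite /superpos rmorphD rmorphM /= !rmorph_nat. Qed.

Lemma rank1_sandwich c u (f g : X -> algC) :
  \sum_x \sum_y f x * rank1 c u x y * g y =
  c * (\sum_x u x * f x) * (\sum_y (u y)^* * g y).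
Proof.
rewrite mulr_sumr mulr_suml; apply: eq_bigr => x _.
by rewrite mulr_sumr; apply: eq_bigr => y _; rewrite /rank1; ring.
Qed.

Lemma rank1_density c u : 0 <= c -> c * \sum_x `|u x| ^+ 2 = 1 -> density (rank1 c u).
Proof.
move=> c_ge0 trace1; split=> [v|]; last first.
  by rewrite -trace1 mulr_sumr; apply: eq_bigr => x _; rewrite /rank1 normCK mulrA.
rewrite rank1_sandwich -mulrA; set w := \sum_x _.
have -> : \sum_y (u y)^* * v y = w^*.
  by rewrite rmorph_sum; apply: eq_bigr => y _; rewrite rmorphM /= conjCK.
by rewrite -normCK mulr_ge0 ?exprn_ge0.
Qed.

Lemma basis_density s : density (rank1 1 (superpos s s 0)).
Proof.
apply: rank1_density; rewrite ?ler01 // mul1r.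
under eq_bigr do rewrite normCK conj_superpos.
by rewrite sum_superpos mul0r addr0 /superpos eqxx rmorph0 mul0r addr0.
Qed.

Lemma superpos_density s s' b : s != s' -> `|b| = 1 ->
  density (rank1 2^-1 (superpos s s' b)).
Proof.
move=> neq_ss' b1; apply: rank1_density; first by rewrite invr_ge0 ler0n.
under eq_bigr do rewrite normCK conj_superpos.
rewrite sum_superpos /superpos !eqxx (negbTE neq_ss') eq_sym (negbTE neq_ss') /=.
by rewrite mulr0 addr0 add0r mulr1 -normCK b1 expr1n -mulr2n mulVf // pnatr_eq0.
Qed.

Lemma density_pairing_superpos (L : X -> X -> algC) c s s' b :
  \sum_x \sum_y rank1 c (superpos s s' b) x y * L x y
  = c * (L s s + b^* * L s s' + b * (L s' s + b^* * L s' s')).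
Proof.
have inner x : \sum_y (superpos s s' b y)^* * L x y = L x s + b^* * L x s'.
  by under eq_bigr do rewrite conj_superpos; rewrite sum_superpos.
transitivity (c * \sum_x superpos s s' b x * \sum_y (superpos s s' b y)^* * L x y).
  rewrite mulr_sumr; apply: eq_bigr => x _; rewrite !mulr_sumr.
  by apply: eq_bigr => y _; rewrite /rank1; ring.
by under eq_bigr do rewrite inner; rewrite sum_superpos.
Qed.

Lemma eq_delta_of_density_pairing (L : X -> X -> algC) (c0 : algC) :
  (forall r, density r -> \sum_x \sum_y r x y * L x y = c0) ->
  forall s s', L s s' = (s == s')%:R * c0.
Proof.
move=> pairingE s s'.
have diag t : L t t = c0.
  have := pairingE _ (basis_density t).
  by rewrite density_pairing_superpos rmorph0 !mul0r !addr0 mul1r.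
have [<-|neq_ss'] := eqVneq s s'; first by rewrite diag mul1r.
(* The test states (|s> + b|s'>)/sqrt 2 for b = 1 and b = 'i show that
   L s s' + L s' s = 0 and L s s' = L s' s. *)
have superposE b : `|b| = 1 ->
    c0 + b^* * L s s' + b * (L s' s + b^* * c0) = 2%:R * c0.
  move=> b1; have := pairingE _ (superpos_density neq_ss' b1).
  rewrite density_pairing_superpos !diag => /(congr1 ( *%R 2%:R)).
  by rewrite mulrA mulfV ?pnatr_eq0 // mul1r.
have := superposE 1 (normr1 _); have := superposE 'i (normCi _).
rewrite rmorph1 conjCi !mul1r => E_i E_1.
have : 2%:R * 'i * L s s' = 0.
  transitivity ('i * (c0 + L s s' + (L s' s + c0) - 2%:R * c0)
                - (c0 + - 'i * L s s' + 'i * (L s' s + - 'i * c0) - 2%:R * c0)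
                - ('i ^+ 2 + 1) * c0); first by ring.
  by rewrite E_1 E_i sqrCi addNr !subrr; ring.
by move/eqP; rewrite !mulf_eq0 pnatr_eq0 (negbTE (neq0Ci _)) mul0r => /eqP.
Qed.

Definition kraus_identity (I : finType) (PI : pred I) (K : I -> X -> X -> algC) :=
  forall r, density r -> forall a b,
    \sum_(i | PI i) \sum_x \sum_y K i a x * r x y * (K i b y)^* = r a b.

Section KrausIdentity.
Variables (I : finType) (PI : pred I) (K : I -> X -> X -> algC).
Hypothesis K_id : kraus_identity PI K.

Lemma kraus_identity_rank1 c u a b : density (rank1 c u) ->
  \sum_(i | PI i) c * (\sum_x u x * K i a x) * (\sum_y u y * K i b y)^*
  = rank1 c u a b.
Proof.
move=> /K_id <-; apply: eq_bigr => i _; rewrite rank1_sandwich rmorph_sum.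
by congr (_ * _); apply: eq_bigr => y _; rewrite rmorphM mulrC.
Qed.

Lemma kraus_identity_basis s a : \sum_(i | PI i) `|K i a s| ^+ 2 = (s == a)%:R.
Proof.
transitivity (rank1 1 (superpos s s 0) a a).
  rewrite -(kraus_identity_rank1 _ _ (basis_density s)); apply: eq_bigr => i _.
  by rewrite !sum_superpos mul0r addr0 mul1r normCK.
by rewrite /rank1 /superpos !mul0r !addr0 mul1r rmorph_nat -natrM mulnb andbb.
Qed.

Lemma kraus_identity_offdiag i a s : PI i -> a != s -> K i a s = 0.
Proof.
move=> PIi neq_as; apply/eqP; rewrite -normr_eq0 -sqrf_eq0; apply/eqP.
have := kraus_identity_basis s a; rewrite eq_sym (negbTE neq_as).
by move/psumr_eq0P; apply=> // j _; rewrite exprn_ge0.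
Qed.

Lemma kraus_identity_diag_cross s s' : s != s' ->
  \sum_(i | PI i) K i s s * (K i s' s')^* = 1.
Proof.
move=> neq_ss'; have neq_s's : s' != s by rewrite eq_sym.
transitivity (2%:R * rank1 2^-1 (superpos s s' 1) s s').
  rewrite -(kraus_identity_rank1 _ _ (superpos_density neq_ss' (normr1 _))) mulr_sumr.
  apply: eq_bigr => i PIi; rewrite !sum_superpos !mul1r.
  rewrite (kraus_identity_offdiag PIi neq_ss') (kraus_identity_offdiag PIi neq_s's).
  by rewrite addr0 add0r !mulrA mulfV ?pnatr_eq0 // mul1r.
rewrite /rank1 /superpos !eqxx (negbTE neq_ss') (negbTE neq_s's) /=.
by rewrite mulr0 addr0 add0r !mul1r conjC_nat; field.
Qed.

Lemma kraus_identity_scalar i : PI i -> forall a s s1, K i a s = (a == s)%:R * K i s1 s1.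
Proof.
move=> PIi a s s1; have [<-|neq_as] := eqVneq a s; last first.
  by rewrite mul0r kraus_identity_offdiag.
rewrite mul1r; have [<-//|neq_as1] := eqVneq a s1.
have dist0 : \sum_(j | PI j) `|K j a a - K j s1 s1| ^+ 2 = 0.
  transitivity (\sum_(j | PI j) `|K j a a| ^+ 2 + \sum_(j | PI j) `|K j s1 s1| ^+ 2
     - (\sum_(j | PI j) K j a a * (K j s1 s1)^* + \sum_(j | PI j) K j s1 s1 * (K j a a)^*)).
    rewrite -!big_split -sumrB; apply: eq_bigr => j _.
    by rewrite !normCK rmorphB /=; ring.
  have neq_s1a : s1 != a by rewrite eq_sym.
  rewrite !kraus_identity_basis !eqxx (kraus_identity_diag_cross neq_as1).
  by rewrite (kraus_identity_diag_cross neq_s1a) subrr.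
apply/eqP; rewrite -subr_eq0 -normr_eq0 -sqrf_eq0; apply/eqP.
by move/psumr_eq0P: dist0; apply=> // j _; rewrite exprn_ge0.
Qed.

End KrausIdentity.

End DensityTests.

Section Configurations.
Variables (n q' : nat) (w : 'I_n -> nat).
Local Notation qconf := (conf q'.+1 w).
Implicit Types (A B T V : {set Qd w}) (x c : qconf).

Lemma glueE A x c i : glue A x c i = if i \in A then x i else c i.
Proof. by rewrite ffunE. Qed.

Lemma glue_glue_setD T V (t u c : qconf) : T \subset V ->
  glue T t (glue (V :\: T) u c) = glue V (glue T t u) c.
Proof.
move=> sTV; apply/ffunP => i; rewrite !glueE !inE.
by case: (boolP (i \in T)) => [/(subsetP sTV)->|].
Qed.

Lemma zero_outside_setT c : zero_outside [set: Qd w] c.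
Proof. by apply/forallP => i; rewrite in_setT. Qed.

Lemma zero_outside_setC V c :
  [forall i, (i \in V) ==> (val (c i) == 0%N)] = zero_outside (~: V) c.
Proof. by apply: eq_forallb => i; rewrite in_setC negbK. Qed.

Lemma big_zero_outside_setU A B (F : qconf -> algC) : [disjoint A & B] ->
  \sum_(x | zero_outside (A :|: B) x) F x =
  \sum_(a | zero_outside A a) \sum_(b | zero_outside B b) F (glue A a b).
Proof.
move=> dAB; pose z0 : qconf := [ffun => ord0].
rewrite (reindex_onto (fun p : qconf * qconf => glue A p.1 p.2)
                      (fun x => (glue A x z0, glue A z0 x))) /=; last first.
  by move=> x _; apply/ffunP => i; rewrite !glueE; case: (i \in A).
rewrite pair_big_dep; apply: eq_bigl => -[a b] /=; rewrite xpair_eqE.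
apply/idP/idP.
- case/and3P => /forallP zAB /eqP Ha /eqP Hb.
  apply/andP; split; apply/forallP => i; apply/implyP => iN.
  + by rewrite -Ha glueE (negbTE iN) ffunE.
  + have [iA|iNA] := boolP (i \in A); first by rewrite -Hb glueE iA ffunE.
    by have := zAB i; rewrite in_setU (negbTE iNA) (negbTE iN) /= glueE (negbTE iNA).
- case/andP => /forallP zA /forallP zB; apply/and3P; split.
  + apply/forallP => i; apply/implyP; rewrite in_setU negb_or => /andP[iNA iNB].
    by rewrite glueE (negbTE iNA); exact: (implyP (zB i) iNB).
  + apply/eqP/ffunP => i; rewrite !glueE; have [//|iNA] := boolP (i \in A).
    by apply/val_inj; rewrite ffunE; apply/esym/eqP/(implyP (zA i)).
  + apply/eqP/ffunP => i; rewrite !glueE; have [iA|//] := boolP (i \in A).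
    apply/val_inj; rewrite ffunE; apply/esym/eqP/(implyP (zB i)).
    by rewrite (disjointFr dAB iA).
Qed.

Lemma big_zero_outside_setC T V (F : qconf -> algC) : T \subset V ->
  \sum_(y | zero_outside (~: T) y) F y =
  \sum_(u | zero_outside (V :\: T) u) \sum_(c | zero_outside (~: V) c)
     F (glue (V :\: T) u c).
Proof.
move=> sTV; rewrite -big_zero_outside_setU; last first.
  by rewrite disjoint_sym disjoints_subset setCS subsetDl.
apply: eq_bigl => y; congr zero_outside; apply/setP => i; rewrite !inE.
by case: (boolP (i \in T)) => [/(subsetP sTV)->|]; rewrite ?andbT ?orbT //; case: (i \in V).
Qed.

Lemma card_zero_outside A : #|[pred c : qconf | zero_outside A c]| = (q'.+1 ^ #|A|)%N.
Proof.
pose f (c : qconf) : {ffun {i | i \in A} -> 'I_q'.+1} := [ffun j => c (val j)].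
pose g (h : {ffun {i | i \in A} -> 'I_q'.+1}) : qconf :=
  [ffun i => if insub i is Some j then h j else ord0].
have -> : (q'.+1 ^ #|A|)%N = #|{ffun {i | i \in A} -> 'I_q'.+1}|.
  by rewrite card_ffun card_ord card_sig.
rewrite -(@card_in_imset _ _ f); last first.
  move=> c1 c2; rewrite !inE => /forallP z1 /forallP z2 /ffunP f12; apply/ffunP => i.
  have [iA|iNA] := boolP (i \in A); first by have := f12 (exist _ i iA); rewrite !ffunE.
  by apply/val_inj; rewrite (eqP (implyP (z1 i) iNA)) (eqP (implyP (z2 i) iNA)).
apply/eqP; rewrite eqn_leq max_card /=; apply/subset_leq_card/subsetP => h _.
apply/imsetP; exists (g h).
  by rewrite inE; apply/forallP => i; apply/implyP => iNA; rewrite ffunE insubN.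
by apply/ffunP => j; rewrite !ffunE valK.
Qed.

End Configurations.

Section Encoding.
Variables (n m q' k : nat) (w : 'I_n -> nat).
Variable E : 'I_k -> conf q'.+1 w -> sconf m q'.+1 -> algC.
Local Notation qconf := (conf q'.+1 w).
Local Notation secret := (sconf m q'.+1).
Let s0 : secret := [ffun => ord0].

Definition secret_independent (Z : {set Qd w}) : Prop :=
  forall r1 r2, density r1 -> density r2 -> forall x y,
    ptrace Z (encode E r1) x y = ptrace Z (encode E r2) x y.

Definition enc_choi (Z : {set Qd w}) (x y : qconf) (s s' : secret) : algC :=
  \sum_(c | zero_outside (~: Z) c) \sum_l E l (glue Z x c) s * (E l (glue Z y c) s')^*.

Lemma ptrace_encodeE Z r x y :
  ptrace Z (encode E r) x y = \sum_s \sum_s' r s s' * enc_choi Z x y s s'.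
Proof.
rewrite /ptrace /encode /apply_kraus /enc_choi; under eq_bigl do rewrite zero_outside_setC.
transitivity (\sum_(c | zero_outside (~: Z) c) \sum_l \sum_s \sum_s'
                r s s' * (E l (glue Z x c) s * (E l (glue Z y c) s')^*)).
  apply: eq_bigr => c _; apply: eq_bigr => l _.
  by apply: eq_bigr => s _; apply: eq_bigr => s' _; ring.
rewrite exchange_big2; apply: eq_bigr => s _; apply: eq_bigr => s' _.
by rewrite mulr_sumr; apply: eq_bigr => c _; rewrite mulr_sumr.
Qed.

Lemma enc_choi_delta Z : secret_independent Z ->
  forall x y s s', enc_choi Z x y s s' = (s == s')%:R * enc_choi Z x y s0 s0.
Proof.
move=> Z_indep x y.
have choiE := @eq_delta_of_density_pairing _ (enc_choi Z x y)
  (ptrace Z (encode E (rank1 1 (superpos s0 s0 0))) x y).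
have {}choiE := choiE (fun r dr => etrans (esym (ptrace_encodeE Z r x y))
                                          (Z_indep r _ dr (basis_density s0) x y)).
by move=> s s'; rewrite choiE (choiE s0 s0) eqxx mul1r.
Qed.

Section Recovery.
Variables (S : {set Qd w}) (k' : nat) (Dec : 'I_k' -> secret -> qconf -> algC).
Hypothesis Dec_tp : kraus_tp Dec (zero_outside S).
Hypothesis Dec_rec : forall r, density r -> forall a b,
  apply_kraus Dec (zero_outside S) (ptrace S (encode E r)) a b = r a b.

(* Kraus operators of: encode, discard the qudits outside S, decode. *)
Definition dec_enc (p : 'I_k' * (qconf * 'I_k)) (a s : secret) : algC :=
  \sum_(x | zero_outside S x) Dec p.1 a x * E p.2.2 (glue S x p.2.1) s.

Lemma dec_enc_identity :
  kraus_identity (fun p : 'I_k' * (qconf * 'I_k) => zero_outside (~: S) p.2.1) dec_enc.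
Proof.
move=> r dr a b; rewrite -(Dec_rec dr a b) /apply_kraus.
rewrite (pair_big_snd (fun e : qconf * 'I_k => zero_outside (~: S) e.1)).
apply: eq_bigr => j _; rewrite pair_big_fst.
transitivity (\sum_(c | zero_outside (~: S) c) \sum_l \sum_s \sum_s'
   \sum_(x | zero_outside S x) \sum_(y | zero_outside S y)
   Dec j a x * E l (glue S x c) s * r s s' * ((E l (glue S y c) s')^* * (Dec j b y)^*)).
  apply: eq_bigr => c _; apply: eq_bigr => l _; apply: eq_bigr => s _.
  apply: eq_bigr => s' _; rewrite /dec_enc /= mulr_suml rmorph_sum mulr_suml.
  apply: eq_bigr => x _; rewrite mulr_sumr; apply: eq_bigr => y _.
  by rewrite rmorphM /=; ring.
symmetry.
transitivity (\sum_(x | zero_outside S x) \sum_(y | zero_outside S y) \sum_s \sum_s'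
   \sum_(c | zero_outside (~: S) c) \sum_l
   Dec j a x * E l (glue S x c) s * r s s' * ((E l (glue S y c) s')^* * (Dec j b y)^*)).
  apply: eq_bigr => x _; apply: eq_bigr => y _.
  rewrite ptrace_encodeE mulr_sumr mulr_suml; apply: eq_bigr => s _.
  rewrite mulr_sumr mulr_suml; apply: eq_bigr => s' _.
  rewrite /enc_choi mulr_sumr mulr_sumr mulr_suml; apply: eq_bigr => c _.
  by rewrite mulr_sumr mulr_sumr mulr_suml; apply: eq_bigr => l _; ring.
rewrite exchange_big2.
under eq_bigr do under eq_bigr do rewrite exchange_big2.
by rewrite exchange_big2.
Qed.

Lemma sum_dec_enc e e' s s' :
  \sum_j \sum_a dec_enc (j, e) a s * (dec_enc (j, e') a s')^* =
  \sum_(x | zero_outside S x) E e.2 (glue S x e.1) s * (E e'.2 (glue S x e'.1) s')^*.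
Proof.
transitivity (\sum_j \sum_a \sum_(x | zero_outside S x) \sum_(y | zero_outside S y)
   (Dec j a x * (Dec j a y)^*) * (E e.2 (glue S x e.1) s * (E e'.2 (glue S y e'.1) s')^*)).
  apply: eq_bigr => j _; apply: eq_bigr => a _.
  rewrite /dec_enc /= rmorph_sum mulr_suml; apply: eq_bigr => x _.
  by rewrite mulr_sumr; apply: eq_bigr => y _; rewrite rmorphM /=; ring.
rewrite exchange_big2; apply: eq_bigr => x zx.
pose G y := E e.2 (glue S x e.1) s * (E e'.2 (glue S y e'.1) s')^*.
rewrite -[RHS](sum_delta G zx); apply: eq_bigr => y zy.
under eq_bigr do rewrite -mulr_suml.
rewrite -mulr_suml; congr (_ * _); rewrite eq_sym -(Dec_tp zy zx).
by apply: eq_bigr => j _; apply: eq_bigr => a _; rewrite mulrC.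
Qed.

End Recovery.

Lemma recoverable_env_decoupled S : recoverable_from E S ->
  exists om : qconf * 'I_k -> qconf * 'I_k -> algC,
  forall s s' (e e' : qconf * 'I_k),
    zero_outside (~: S) e.1 -> zero_outside (~: S) e'.1 ->
    \sum_(x | zero_outside S x) E e.2 (glue S x e.1) s * (E e'.2 (glue S x e'.1) s')^*
    = (s == s')%:R * om e e'.
Proof.
case=> k' [Dec [Dec_tp Dec_rec]].
have scalar := kraus_identity_scalar (dec_enc_identity Dec_rec).
exists (fun e e' => \sum_j dec_enc S Dec (j, e) s0 s0 * (dec_enc S Dec (j, e') s0 s0)^*).
move=> s s' e e' ze ze'; rewrite -(sum_dec_enc Dec_tp) mulr_sumr.
apply: eq_bigr => j _; set kk := _ * _^*.
rewrite eq_sym -[RHS](sum_delta (fun a => (s' == a)%:R * kk) (isT : predT s)).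
apply: eq_bigr => a _; rewrite (scalar (j, e) ze a s s0) (scalar (j, e') ze' a s' s0).
by rewrite rmorphM /= rmorph_nat !(eq_sym a) /kk; ring.
Qed.

Section Split.
Variables (S Z : {set Qd w}).
Local Notation T := (S :&: Z).
Local Notation U := (S :\: Z).

(* The encoding as a pure state on the secret basis (reference system), the
   environment (qudits outside S, Kraus index), and the qudits in T and U. *)
Definition split_state (s : secret) (e : qconf * 'I_k) (t u : qconf) : algC :=
  E e.2 (glue S (glue T t u) e.1) s.

Lemma big_zero_outside_split (F : qconf -> algC) :
  \sum_(x | zero_outside S x) F x =
  \sum_(t | zero_outside T t) \sum_(u | zero_outside U u) F (glue T t u).
Proof.
rewrite -{1}(setID S Z) big_zero_outside_setU // disjoints_subset setCD.
by apply/subsetU; rewrite subsetIr orbT.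
Qed.

Lemma split_state_share_marginal : secret_independent Z ->
  id_tensor_marginal (fun s t e u => split_state s e t u)
    (zero_outside T) (fun e => zero_outside (~: S) e.1) (zero_outside U)
    (fun t t' => \sum_(g | zero_outside (Z :\: T) g)
                   enc_choi Z (glue T t g) (glue T t' g) s0 s0).
Proof.
move=> Z_indep s s' t t' _ _; rewrite pair_big_fst.
have sTS : T \subset S := subsetIl S Z.
have sTZ : T \subset Z := subsetIr S Z.
have SdT : S :\: T = U by rewrite setDIr setDv set0U.
transitivity (\sum_l \sum_(y | zero_outside (~: T) y)
                E l (glue T t y) s * (E l (glue T t' y) s')^*).
  rewrite exchange_big /=; apply: eq_bigr => l _.
  rewrite -SdT (big_zero_outside_setC _ sTS) exchange_big /=.
  by apply: eq_bigr => u _; apply: eq_bigr => c _; rewrite !glue_glue_setD.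
rewrite exchange_big /= (big_zero_outside_setC _ sTZ) mulr_sumr; apply: eq_bigr => g _.
rewrite -enc_choi_delta // /enc_choi; apply: eq_bigr => c _; apply: eq_bigr => l _.
by rewrite !glue_glue_setD.
Qed.

Lemma split_state_env_marginal : recoverable_from E S ->
  exists om, id_tensor_marginal split_state (fun e => zero_outside (~: S) e.1)
                                (zero_outside T) (zero_outside U) om.
Proof.
case/recoverable_env_decoupled => om omP; exists om => s s' e e' ze ze'.
by rewrite -omP // big_zero_outside_split.
Qed.

Lemma split_state_norm : kraus_tp E predT ->
  \sum_(e | zero_outside (~: S) e.1) \sum_(t | zero_outside T t)
     \sum_(u | zero_outside U u) `|split_state s0 e t u| ^+ 2 = 1.
Proof.
move=> E_tp; rewrite pair_big_fst exchange_big /=.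
transitivity ((s0 == s0)%:R : algC); last by rewrite eqxx.
rewrite -(E_tp s0 s0 isT isT); apply: eq_bigr => l _.
transitivity (\sum_(x | zero_outside S x) \sum_(c | zero_outside (~: S) c)
                `|E l (glue S x c) s0| ^+ 2).
  by rewrite [RHS]exchange_big /=; apply: eq_bigr => c _; rewrite big_zero_outside_split.
rewrite -(big_zero_outside_setU (fun y => `|E l y s0| ^+ 2)) ?setUCr; last first.
  by rewrite disjoints_subset setCK.
by apply: eq_big => [y|y _]; rewrite ?zero_outside_setT ?normCKC.
Qed.

Lemma card_setD_unauthorized : (1 < q'.+1)%N ->
  kraus_tp E predT -> recoverable_from E S -> secret_independent Z ->
  (m <= #|S :\: Z|)%N.
Proof.
move=> q_gt1 E_tp S_rec Z_indep.
have [om omP] := split_state_env_marginal S_rec.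
have := card_le_of_id_tensor_marginals (s0 := s0) (split_state_share_marginal Z_indep) omP.
rewrite split_state_norm // oner_eq0 => /(_ isT).
by rewrite card_zero_outside card_ffun !card_ord leq_exp2l.
Qed.

End Split.

End Encoding.

(* S is the set of qudits sent to the combiner, so CC_n(A) = #|S|. *)
Theorem theorem5 (n m q : nat) (w : 'I_n -> nat) (t z : nat) (k : nat)
  (E : 'I_k -> conf q w -> sconf m q -> algC) :
  (2 <= q)%N -> (z < t)%N -> (t <= n)%N -> is_QSS t z E ->
  forall (A : {set 'I_n}) (S : {set Qd w}),
    S \subset share_qudits w A -> recoverable_from E S ->
    (#|A| * m)%:R / (#|A| - z)%:R <= (#|S|)%:R :> rat.
Proof.
case: q E => [//|q'] E q_gt1 _ _ [E_tp [_ unauth]] A S sSA S_rec.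
have [Az|zA] := leqP #|A| z.
  by move: Az; rewrite -subn_eq0 => /eqP->; rewrite invr0 mulr0 ler0n.
have avg : (#|A| * m <= #|S| * (#|A| - z))%N.
  apply: (card_avoiding_draws_average (f := tag)) zA _ => [x /(subsetP sSA)|Z _ cardZ].
    by rewrite inE.
  by apply: (card_setD_unauthorized q_gt1 E_tp S_rec); apply: unauth; rewrite cardZ.
by rewrite ler_pdivrMr ?ltr0n ?subn_gt0 // -natrM ler_nat.
Qed.
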